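(* Let $\mu_1,\mu_2$, $P_{n,m}$, the shifted step-line polynomials $p_n^{(0,k)}$, their recurrence coefficients $\beta_n^{(0,k)},\gamma_n^{(0,k)},\delta_n^{(0,k)}$ and the numbers $c_n^{(0,k)}$ be as in the context. Then for all $k\ge 0$: \begin{align*} \beta_{2n+k}^{(0,k+1)} &= \beta_{2n+k}^{(0,k)} + c_n^{(0,k)}, && n\ge 0,\\ \gamma_{2n+k}^{(0,k+1)} &= \gamma_{2n+k}^{(0,k)}, && n\ge 1,\\ \delta_{2n+k}^{(0,k+1)} &= \delta_{2n+k}^{(0,k)} + c_{n-1}^{(0,k)}\gamma_{2n+k}^{(0,k)}, && n\ge 1, \end{align*} and \begin{align*} \beta_{2n+k+1}^{(0,k+1)} &= \beta_{2n+k+1}^{(0,k)} - c_n^{(0,k)}, && n\ge 0,\\ \gamma_{2n+k+1}^{(0,k+1)} &= \gamma_{2n+k+1}^{(0,k)} - c_n^{(0,k)}\bigl(\beta_{2n+k}^{(0,k)}-\beta_{2n+k+1}^{(0,k+1)}\bigr), && n\ge 0,\\ \delta_{2n+k+1}^{(0,k+1)} &= \delta_{2n+k+1}^{(0,k)} - c_n^{(0,k)}\gamma_{2n+k}^{(0,k)}, && n\ge 1, \end{align*} where $(c_n^{(0,k)})_{n\ge 0}$ is the solution of the Riccati type difference equation \[ c_n^{(0,k)} = \frac{c_{n-1}^{(0,k)}\,\delta_{2n+k+1}^{(0,k)}}{\delta_{2n+k}^{(0,k)} + c_{n-1}^{(0,k)}\gamma_{2n+k}^{(0,k)}}, \qquad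 n\ge 1, \] with initial condition $c_0^{(0,k)} = \delta_{k+1}^{(0,k)}/\gamma_k^{(0,k)}$ for $k\ge 1$, while for $k=0$ the value $c_0^{(0,0)}$ is a free parameter (not given by such a formula).
   Context: Let $\mu_1,\mu_2$ be positive Borel measures on $\mathbb{R}$ with all moments finite, forming a normal system: for every $(n,m)\in\mathbb{N}^2$ ($\mathbb{N}=\{0,1,2,\dots\}$) there is a unique monic polynomial $P_{n,m}$ of degree $n+m$ with $\int x^k P_{n,m}(x)\,d\mu_1(x)=0$ for $0\le k\le n-1$ and $\int x^k P_{n,m}(x)\,d\mu_2(x)=0$ for $0\le k\le m-1$. Set $P_{n,m}=0$ if $n<0$ or $m<0$. For $k\ge 0$ define the shifted step-line polynomials $p_{2n+k}^{(0,k)}=P_{n,n+k}$ and $p_{2n+k+1}^{(0,k)}=P_{n+1,n+k}$ for $n\ge -1$ (with the convention above, so $p_{k-1}^{(0,k)}=P_{0,k-1}$ and $p_{k-2}^{(0,k)}=0$). For $n\ge k$ they satisfy the four-term recurrence \[ x p_n^{(0,k)}(x) = p_{n+1}^{(0,k)}(x) + \beta_n^{(0,k)} p_n^{(0,k)}(x) + \gamma_n^{(0,k)} p_{n-1}^{(0,k)}(x) + \delta_n^{(0,k)} p_{n-2}^{(0,k)}(x), \] which defines the real numbers $\beta_n^{(0,k)},\gamma_n^{(0,k)},\delta_n^{(0,k)}$ for $n\ge k$ (coefficients multiplying the zero polynomial are set to $0$). In addition, for $k\ge 0$, $\beta_k^{(0,k+1)}$ denotes the constant such that $xP_{0,k}(x)-P_{0,k+1}(x)-\beta_k^{(0,k+1)}P_{0,k}(x)$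 has degree less than $k$. For $k=0$ one gets the step-line polynomials $p_{2n}=P_{n,n}$, $p_{2n+1}=P_{n+1,n}$ with coefficients $\beta_n=\beta_n^{(0,0)}$, $\gamma_n=\gamma_n^{(0,0)}$, $\delta_n=\delta_n^{(0,0)}$. For $k\ge 0$ and $n\ge 0$, $c_n^{(0,k)}$ denotes the constant such that $P_{n+1,n+k}(x)-P_{n,n+k+1}(x)=c_n^{(0,k)}P_{n,n+k}(x)$ (such a constant exists). *)

From HB Require Import structures.
From mathcomp Require Import all_boot all_order all_algebra.
From mathcomp Require Import all_classical all_reals all_analysis.
Set Implicit Arguments. Unset Strict Implicit. Unset Printing Implicit Defensive.
Import Order.TTheory GRing.Theory Num.Theory.
Local Open Scope ring_scope.

Section Defs.
Variable R : realType.

Definition finite_moments (mu : {measure set R -> \bar R}) : Prop :=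
  forall k : nat, mu.-integrable setT (fun x : R => (x ^+ k)%:E).

Definition is_mop (mu1 mu2 : {measure set R -> \bar R}) (n m : nat)
    (Q : {poly R}) : Prop :=
  [/\ Q \is monic, size Q = (n + m).+1,
      (forall j : nat, (j < n)%N ->
          (\int[mu1]_x ((x ^+ j * Q.[x])%:E) = 0)%E) &
      (forall j : nat, (j < m)%N ->
          (\int[mu2]_x ((x ^+ j * Q.[x])%:E) = 0)%E)].

Definition normal_system_with (mu1 mu2 : {measure set R -> \bar R})
    (P : nat -> nat -> {poly R}) : Prop :=
  forall n m : nat, is_mop mu1 mu2 n m (P n m) /\
    (forall Q, is_mop mu1 mu2 n m Q -> Q = P n m).

(* Shifted step-line polynomials p_j^{(0,k)}, indexed by j : int, with the
   convention P_{n,m} = 0 for negative indices: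
     p_{2n+k}^{(0,k)} = P_{n,n+k},  p_{2n+k+1}^{(0,k)} = P_{n+1,n+k}  (n >= 0),
     p_{k-1}^{(0,k)} = P_{0,k-1} (k >= 1),  and 0 for smaller indices. *)
Definition pstep (P : nat -> nat -> {poly R}) (k : nat) (j : int) : {poly R} :=
  match j with
  | Posz j' =>
      if (k <= j')%N then
        let n := ((j' - k)./2)%N in
        if odd (j' - k) then P n.+1 (n + k)%N else P n (n + k)%N
      else if j'.+1 == k then P 0%N k.-1 else 0
  | Negz _ => 0
  end.

End Defs.

(* Write p = p^(0,k) and q = p^(0,k+1).  On the shifted step-line q_(2n+k) = p_(2n+k),
   while q_(2n+k+1) = P_(n,n+k+1) = p_(2n+k+1) - c_n p_(2n+k).  Substituting this into the
   recurrence for x q_j and expanding every x p_i by the recurrence for p leaves a vanishing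
   combination of the monic polynomials p_i, which have distinct degrees, plus terms of lower
   degree; the leading coefficients give the relations one after the other.  Normality makes
   the delta^(0,k+1) at odd positions and gamma^(0,k)_k (k >= 1) nonzero, so the relations
   can be solved for c_n: this is the Riccati equation and the value of c_0. *)

From HB Require Import structures.
From mathcomp Require Import all_boot all_order all_algebra.
From mathcomp Require Import all_classical all_reals all_analysis.
From mathcomp Require Import zify ring.
Set Implicit Arguments. Unset Strict Implicit. Unset Printing Implicit Defensive.
Import Order.TTheory GRing.Theory Num.Theory.
Local Open Scope ring_scope.

Lemma monic_scaleD_size_lt (R : nzRingType) (A B : {poly R}) (a : R) :
  A \is monic -> (size B < size A)%N -> (size (a *: A + B)%R < size A)%N -> a = 0.
Proof.
move=> /monicP lcA ltBA ltA.
have sAd : size A = (size A).-1.+1 by rewrite prednK // (leq_ltn_trans _ ltBA).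
have : (a *: A + B)`_(size A).-1 = 0 by apply: nth_default; rewrite -ltnS -sAd.
rewrite coefD coefZ -lead_coefE lcA mulr1 nth_default ?addr0 //.
by rewrite -ltnS -sAd.
Qed.

Lemma monic_scaleD_eq0 (R : nzRingType) (A B : {poly R}) (a : R) :
  A \is monic -> (size B < size A)%N -> a *: A + B = 0 -> a = 0 /\ B = 0.
Proof.
move=> mA ltBA eq0; have a0 : a = 0.
  apply: (monic_scaleD_size_lt mA ltBA).
  by rewrite eq0 size_poly0 (leq_ltn_trans _ ltBA).
by split=> //; rewrite -eq0 a0 scale0r add0r.
Qed.

Lemma size_scaleD_leq (R : nzRingType) (p q : {poly R}) (a : R) n :
  (size p <= n)%N -> (size q <= n)%N -> (size (a *: p + q)%R <= n)%N.
Proof.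
move=> ltpn ltqn; apply: leq_trans (size_polyD _ _) _.
by rewrite geq_max ltqn (leq_trans (size_scale_leq _ _)).
Qed.

Section Moments.
Variables (R : realType) (mu : {measure set R -> \bar R}).
Hypothesis mu_moments : finite_moments mu.

Lemma integrable_monomial_horner (j : nat) (Q : {poly R}) :
  mu.-integrable setT (fun x => (x ^+ j * Q.[x])%:E).
Proof.
elim/poly_ind: Q j => [|Q a IHQ] j.
  apply: (eq_integrable _ _ _ _ (integrable0 mu setT)) => // x _ /=.
  by rewrite horner0 mulr0.
have := integrableD measurableT (IHQ j.+1) (integrableZl measurableT a (mu_moments j)).
apply: eq_integrable => // x _ /=.
by rewrite hornerMXaddC -EFinM -EFinD exprS; congr EFin; ring.
Qed.

Definition moment (j : nat) (Q : {poly R}) : R :=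
  fine (\int[mu]_x (x ^+ j * Q.[x])%:E).

Lemma momentE j Q : (\int[mu]_x (x ^+ j * Q.[x])%:E)%E = (moment j Q)%:E.
Proof. by rewrite fineK // integrable_fin_num // integrable_monomial_horner. Qed.

Lemma momentD j Q1 Q2 : moment j (Q1 + Q2) = moment j Q1 + moment j Q2.
Proof.
apply: EFin_inj; rewrite EFinD -!momentE -integralD //; last first.
- exact: integrable_monomial_horner.
- exact: integrable_monomial_horner.
by apply: eq_integral => x _; rewrite hornerD mulrDr EFinD.
Qed.

Lemma momentZ j a Q : moment j (a *: Q) = a * moment j Q.
Proof.
apply: EFin_inj; rewrite EFinM -!momentE -integralZl //; last first.
  exact: integrable_monomial_horner.
by apply: eq_integral => x _; rewrite hornerZ -EFinM; congr EFin; ring.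
Qed.

Lemma momentXl j Q : moment j ('X * Q) = moment j.+1 Q.
Proof.
rewrite /moment; congr fine; apply: eq_integral => x _.
by rewrite [('X * Q)]mulrC hornerMX exprS; congr EFin; ring.
Qed.

End Moments.

Section NormalSystem.
Variables (R : realType) (mu1 mu2 : {measure set R -> \bar R}).
Variable P : nat -> nat -> {poly R}.
Hypotheses (mu1_moments : finite_moments mu1) (mu2_moments : finite_moments mu2).
Hypothesis normalP : normal_system_with mu1 mu2 P.

Lemma monic_P n m : P n m \is monic.
Proof. by case: (normalP n m) => -[]. Qed.

Lemma size_P n m : size (P n m) = (n + m).+1.
Proof. by case: (normalP n m) => -[]. Qed.

Lemma P_neq0 n m : P n m != 0.
Proof. by rewrite -size_poly_eq0 size_P. Qed.

Lemma moment1_P j n m : (j < n)%N -> moment mu1 j (P n m) = 0.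
Proof. by case: (normalP n m) => -[_ _ orth _] _ /orth; rewrite /moment => ->. Qed.

Lemma moment2_P j n m : (j < m)%N -> moment mu2 j (P n m) = 0.
Proof. by case: (normalP n m) => -[_ _ _ orth] _ /orth; rewrite /moment => ->. Qed.

(* Otherwise P n m.+1 + P n m would be a second multiple orthogonal polynomial
   of index (n, m.+1). *)
Lemma moment2_P_neq0 n m : moment mu2 m (P n m) != 0.
Proof.
apply/negP => /eqP orth_m.
have ltPP : (size (P n m) < size (P n m.+1))%N by rewrite !size_P addnS.
suff /(normalP n m.+1).2 /eqP : is_mop mu1 mu2 n m.+1 (P n m.+1 + P n m).
  by rewrite -subr_eq0 addrAC subrr add0r (negbTE (P_neq0 n m)).
split.
- by rewrite monicE lead_coefDl // -monicE monic_P.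
- by rewrite size_polyDl // size_P.
- by move=> j ltjn; rewrite momentE // momentD // !moment1_P // addr0.
- move=> j; rewrite ltnS leq_eqVlt => /orP[/eqP->|ltjm].
    by rewrite momentE // momentD // orth_m moment2_P // addr0.
  by rewrite momentE // momentD // !moment2_P // ?addr0 // ltnW.
Qed.

End NormalSystem.

Section StepLine.
Variables (R : realType) (P : nat -> nat -> {poly R}).

Lemma pstep_sub1 k j : pstep P k (j.+1%:Z - 1) = pstep P k j.
Proof. by congr pstep; lia. Qed.

Lemma pstep_sub2 k j : pstep P k (j.+1%:Z - 2) = pstep P k (j%:Z - 1).
Proof. by congr pstep; lia. Qed.

Lemma pstep_even k n : pstep P k (2 * n + k)%N = P n (n + k).
Proof. by rewrite /pstep leq_addl addnK mul2n odd_double doubleK. Qed.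

Lemma pstep_odd k n : pstep P k (2 * n + k).+1 = P n.+1 (n + k).
Proof.
rewrite /pstep ifT; last by lia.
have -> : ((2 * n + k).+1 - k = (n.*2).+1)%N by rewrite -mul2n; lia.
by rewrite /= odd_double /= uphalf_double.
Qed.

Lemma pstep_shift k n : pstep P k.+1 (2 * n + k)%N = P n (n + k).
Proof.
case: n => [|n]; first by rewrite /pstep muln0 add0n ltnn eqxx.
by rewrite mulnS add2n addSn -addnS pstep_odd addSn addnS.
Qed.

Lemma pstep_start k : pstep P k.+1 k = P 0 k.
Proof. by have := pstep_shift k 0; rewrite muln0 add0n. Qed.

Lemma pstep_shift_succ k n : pstep P k.+1 (2 * n + k).+1 = P n (n + k).+1.
Proof. by rewrite -addnS pstep_even addnS. Qed.

Lemma pstep_eq0 k (z : int) : z < k%:Z - 1 -> pstep P k z = 0.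
Proof.
case: z => [j|j] //= ltjk.
rewrite /pstep ifF; last by lia.
by rewrite ifF //; apply/eqP; lia.
Qed.

Lemma size_pstep (k m : nat) (z : int) :
  (forall n m, size (P n m) = (n + m).+1) -> z < m%:Z -> (size (pstep P k z) <= m)%N.
Proof.
move=> size_P; case: z => [j|j] /= ltjm; last by rewrite size_poly0.
rewrite /pstep; case: ifP => lekj.
  have := odd_double_half (j - k); rewrite -mul2n.
  by case: (odd (j - k)) => /= jk; rewrite size_P; lia.
by case: ifP => /eqP; rewrite ?size_poly0 // size_P; lia.
Qed.

End StepLine.

Section ShiftedRecurrence.
Variables (R : realType) (mu1 mu2 : {measure set R -> \bar R}).
Variable P : nat -> nat -> {poly R}.
Variables beta gamma delta c : nat -> nat -> R.
Hypotheses (mu1_moments : finite_moments mu1) (mu2_moments : finite_moments mu2).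
Hypothesis normalP : normal_system_with mu1 mu2 P.
Hypothesis pstep_rec : forall k n : nat, (k <= n)%N ->
  'X * pstep P k n = pstep P k (n.+1)%:Z + beta k n *: pstep P k n
    + gamma k n *: pstep P k (n%:Z - 1) + delta k n *: pstep P k (n%:Z - 2).
Hypothesis beta_start : forall k : nat,
  (size ('X * P 0%N k - P 0%N k.+1 - beta k.+1 k *: P 0%N k)%R <= k)%N.
Hypothesis P_succ_sub : forall k n : nat,
  P n.+1 (n + k)%N - P n (n + k).+1 = c k n *: P n (n + k)%N.

Let sizeP := size_P normalP.
Let monicP := monic_P normalP.

Lemma P_shift k n : P n (n + k).+1 = P n.+1 (n + k) - c k n *: P n (n + k).
Proof. by rewrite -P_succ_sub opprB addrC subrK. Qed.

Lemma rec_even k n :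
  'X * P n (n + k) = P n.+1 (n + k) + beta k (2 * n + k) *: P n (n + k)
    + gamma k (2 * n + k) *: pstep P k ((2 * n + k)%N%:Z - 1)
    + delta k (2 * n + k) *: pstep P k ((2 * n + k)%N%:Z - 2).
Proof. by rewrite -pstep_even -pstep_odd; apply: pstep_rec; lia. Qed.

Lemma rec_odd k n :
  'X * P n.+1 (n + k) = P n.+1 (n + k).+1 + beta k (2 * n + k).+1 *: P n.+1 (n + k)
    + gamma k (2 * n + k).+1 *: P n (n + k)
    + delta k (2 * n + k).+1 *: pstep P k ((2 * n + k)%N%:Z - 1).
Proof.
have := pstep_rec (leqW (leq_addl (2 * n) k)).
rewrite pstep_odd pstep_sub1 pstep_even pstep_sub2.
have -> : (2 * n + k).+2 = (2 * n.+1 + k)%N by lia.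
by rewrite pstep_even addSn.
Qed.

(* Against x^(n+k) dmu2 only the delta term of the recurrence survives, while the left side
   is the nonzero moment of P_(n+1,n+k+1). *)
Lemma delta_odd_neq0 k n : delta k.+1 (2 * n + k).+2 != 0.
Proof.
apply/eqP => delta0; have := rec_odd k.+1 n.
rewrite !addnS delta0 scale0r addr0 => /(congr1 (moment mu2 (n + k))).
rewrite momentXl !momentD // !momentZ //.
rewrite !(moment2_P normalP (j := n + k)) ?mulr0 ?addr0; try lia.
by move/eqP; rewrite (negbTE (moment2_P_neq0 mu1_moments mu2_moments normalP _ _)).
Qed.

Lemma gamma_diag_neq0 k : gamma k.+1 k.+1 != 0.
Proof.
apply/eqP => gamma0; have := rec_even k.+1 0.
rewrite muln0 !add0n pstep_sub1 pstep_start pstep_sub2 pstep_eq0 ?scaler0 ?addr0; last by lia.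
rewrite gamma0 scale0r addr0 => /(congr1 (moment mu2 k)).
rewrite momentXl momentD // momentZ // !(moment2_P normalP (j := k)) ?mulr0 ?addr0 //.
by move/eqP; rewrite (negbTE (moment2_P_neq0 mu1_moments mu2_moments normalP _ _)).
Qed.

Lemma shift_rec_odd k n :
  [/\ beta k.+1 (2 * n + k).+1 = beta k (2 * n + k).+1 - c k n,
      gamma k.+1 (2 * n + k).+1
        = gamma k (2 * n + k).+1 - c k n * (beta k (2 * n + k) - beta k.+1 (2 * n + k).+1) &
      (delta k (2 * n + k).+1 - c k n * gamma k (2 * n + k))
          *: pstep P k ((2 * n + k)%N%:Z - 1)
        - (c k n * delta k (2 * n + k)) *: pstep P k ((2 * n + k)%N%:Z - 2)
      = delta k.+1 (2 * n + k).+1 *: pstep P k.+1 ((2 * n + k)%N%:Z - 1)].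
Proof.
have rec_k1 := rec_even k.+1 n.
rewrite !addnS pstep_sub1 pstep_shift pstep_sub2 (P_shift k n) in rec_k1.
rewrite mulrBr -scalerAr (rec_odd k n) (rec_even k n) in rec_k1.
have : (beta k (2 * n + k).+1 - c k n - beta k.+1 (2 * n + k).+1) *: P n.+1 (n + k)
    + ((gamma k (2 * n + k).+1 - c k n * beta k (2 * n + k)
        + c k n * beta k.+1 (2 * n + k).+1 - gamma k.+1 (2 * n + k).+1) *: P n (n + k)
    + ((delta k (2 * n + k).+1 - c k n * gamma k (2 * n + k))
          *: pstep P k ((2 * n + k)%N%:Z - 1)
       + ((- (c k n * delta k (2 * n + k))) *: pstep P k ((2 * n + k)%N%:Z - 2)
       + (- delta k.+1 (2 * n + k).+1) *: pstep P k.+1 ((2 * n + k)%N%:Z - 1)))) = 0.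
  by move/eqP: rec_k1; rewrite -subr_eq0 => /eqP <-; rewrite -!mul_polyC; ring.
set rem := (_ *: pstep P k _ + _) => eq0.
have size_rem : (size rem <= 2 * n + k)%N.
  by rewrite !size_scaleD_leq ?(leq_trans (size_scale_leq _ _)) // size_pstep //; lia.
have [|beta_eq {}eq0] := monic_scaleD_eq0 (monicP _ _) _ eq0.
  by rewrite !sizeP ltnS size_scaleD_leq // ?sizeP ?(leq_trans size_rem); lia.
have [|gamma_eq rem0] := monic_scaleD_eq0 (monicP _ _) _ eq0.
  by rewrite sizeP ltnS (leq_trans size_rem) //; lia.
split.
- by rewrite -[LHS]addr0 -beta_eq; ring.
- by rewrite -[LHS]addr0 -gamma_eq; ring.
- by rewrite -[RHS]addr0 -rem0 /rem -!mul_polyC; ring.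
Qed.

Lemma shift_rec_even k n :
  [/\ beta k.+1 (2 * n + k).+2 = beta k (2 * n + k).+2 + c k n.+1,
      gamma k.+1 (2 * n + k).+2 = gamma k (2 * n + k).+2 &
      delta k.+1 (2 * n + k).+2 = delta k (2 * n + k).+2 + c k n * gamma k (2 * n + k).+2].
Proof.
have rec_k := rec_even k n.+1.
rewrite mulnS add2n !addSn pstep_sub1 pstep_odd pstep_sub2 pstep_sub1 pstep_even in rec_k.
have rec_k1 := rec_odd k.+1 n.
have shift_succ := P_shift k n.+1; rewrite addSn in shift_succ.
rewrite !addnS pstep_sub1 pstep_shift shift_succ (P_shift k n) rec_k in rec_k1.
have : (beta k (2 * n + k).+2 + c k n.+1 - beta k.+1 (2 * n + k).+2) *: P n.+1 (n + k).+1
    + ((gamma k (2 * n + k).+2 - gamma k.+1 (2 * n + k).+2) *: P n.+1 (n + k)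
    + (delta k (2 * n + k).+2 + gamma k.+1 (2 * n + k).+2 * c k n
        - delta k.+1 (2 * n + k).+2) *: P n (n + k)) = 0.
  by move/eqP: rec_k1; rewrite -subr_eq0 => /eqP <-; rewrite -!mul_polyC; ring.
move=> eq0; have [|beta_eq {}eq0] := monic_scaleD_eq0 (monicP _ _) _ eq0.
  by rewrite sizeP ltnS size_scaleD_leq // ?(leq_trans (size_scale_leq _ _)) // sizeP; lia.
have [|gamma_eq delta_eq] := monic_scaleD_eq0 (monicP _ _) _ eq0.
  by rewrite (leq_ltn_trans (size_scale_leq _ _)) // !sizeP; lia.
move/eqP: delta_eq; rewrite scaler_eq0 (negbTE (P_neq0 normalP _ _)) orbF => /eqP delta_eq.
have gamma_eq' : gamma k.+1 (2 * n + k).+2 = gamma k (2 * n + k).+2.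
  by rewrite -[LHS]addr0 -gamma_eq; ring.
split=> //.
- by rewrite -[LHS]addr0 -beta_eq; ring.
- by rewrite -[LHS]addr0 -delta_eq gamma_eq'; ring.
Qed.

Lemma shift_delta_odd k n :
  delta k.+1 (2 * n + k).+3 = delta k (2 * n + k).+3 - c k n.+1 * gamma k (2 * n + k).+2
  /\ delta k.+1 (2 * n + k).+3 * c k n = c k n.+1 * delta k (2 * n + k).+2.
Proof.
have [_ _] := shift_rec_odd k n.+1.
rewrite mulnS add2n !addSn pstep_sub1 pstep_sub2 pstep_sub1 pstep_odd pstep_even.
rewrite pstep_shift_succ (P_shift k n) => rec_eq.
have : (delta k (2 * n + k).+3 - c k n.+1 * gamma k (2 * n + k).+2
        - delta k.+1 (2 * n + k).+3) *: P n.+1 (n + k)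
    + (delta k.+1 (2 * n + k).+3 * c k n - c k n.+1 * delta k (2 * n + k).+2)
        *: P n (n + k) = 0.
  by move/eqP: rec_eq; rewrite -subr_eq0 => /eqP <-; rewrite -!mul_polyC; ring.
move=> eq0; have [|delta_eq {}eq0] := monic_scaleD_eq0 (monicP _ _) _ eq0.
  by rewrite (leq_ltn_trans (size_scale_leq _ _)) // !sizeP; lia.
move/eqP: eq0; rewrite scaler_eq0 (negbTE (P_neq0 normalP _ _)) orbF => /eqP c_eq.
split; first by rewrite -[LHS]addr0 -delta_eq; ring.
by rewrite -[RHS]addr0 -c_eq; ring.
Qed.

Lemma shift_beta_start k : beta k.+1 k = beta k k + c k 0.
Proof.
have := rec_even k 0; rewrite muln0 !add0n => rec_k.
have := P_shift k 0; rewrite !add0n => shift0.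
set rem := gamma k k *: pstep P k (k%:Z - 1) + delta k k *: pstep P k (k%:Z - 2).
have rem_eq : 'X * P 0 k - P 0 k.+1 - beta k.+1 k *: P 0 k
    = (beta k k + c k 0 - beta k.+1 k) *: P 0 k + rem.
  by rewrite /rem rec_k shift0 -!mul_polyC; ring.
have size_rem : (size rem <= k)%N.
  by rewrite size_scaleD_leq ?(leq_trans (size_scale_leq _ _)) // size_pstep //; lia.
have beta_eq : beta k k + c k 0 - beta k.+1 k = 0.
  apply: (monic_scaleD_size_lt (monicP 0 k) (B := rem));
    by rewrite -?rem_eq sizeP add0n ltnS ?size_rem ?beta_start.
by rewrite -[LHS]addr0 -beta_eq; ring.
Qed.

Lemma c_start k : c k.+1 0 = delta k.+1 k.+2 / gamma k.+1 k.+1.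
Proof.
have [_ _] := shift_rec_odd k.+1 0.
rewrite muln0 add0n pstep_sub1 pstep_start pstep_sub2 pstep_sub1 !pstep_eq0; try lia.
rewrite !scaler0 subr0 => /eqP; rewrite scaler_eq0 (negbTE (P_neq0 normalP _ _)) orbF.
rewrite subr_eq0 => /eqP ->.
by rewrite mulfK // gamma_diag_neq0.
Qed.

Lemma c_riccati k n :
  c k n.+1 = c k n * delta k (2 * n + k).+3
             / (delta k (2 * n + k).+2 + c k n * gamma k (2 * n + k).+2).
Proof.
have [delta_odd c_rel] := shift_delta_odd k n.
have [_ _ delta_even] := shift_rec_even k n.
rewrite -delta_even; apply: (canRL (mulfK (delta_odd_neq0 k n))).
by rewrite delta_even mulrDr -c_rel delta_odd; ring.
Qed.

End ShiftedRecurrence.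

Theorem theorem2p2 (R : realType) (mu1 mu2 : {measure set R -> \bar R})
  (P : nat -> nat -> {poly R})
  (beta gamma delta : nat -> nat -> R) (c : nat -> nat -> R) :
  finite_moments mu1 -> finite_moments mu2 ->
  normal_system_with mu1 mu2 P ->
  (* beta k n, gamma k n, delta k n stand for beta_n^(0,k), gamma_n^(0,k), delta_n^(0,k) *)
  (forall k n : nat, (k <= n)%N ->
     'X * pstep P k n = pstep P k (n.+1)%:Z + beta k n *: pstep P k n
       + gamma k n *: pstep P k (n%:Z - 1) + delta k n *: pstep P k (n%:Z - 2)) ->
  (forall k n : nat, (k <= n)%N -> pstep P k (n%:Z - 1) = 0 -> gamma k n = 0) ->
  (forall k n : nat, (k <= n)%N -> pstep P k (n%:Z - 2) = 0 -> delta k n = 0) ->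
  (forall k : nat,
     (size ('X * P 0%N k - P 0%N k.+1 - beta k.+1 k *: P 0%N k)%R <= k)%N) ->
  (forall k n : nat,
     P n.+1 (n + k)%N - P n (n + k).+1 = c k n *: P n (n + k)%N) ->
  forall k : nat,
  (forall n : nat,
        beta k.+1 (2 * n + k)%N = beta k (2 * n + k)%N + c k n) /\
  (forall n : nat, (1 <= n)%N ->
        gamma k.+1 (2 * n + k)%N = gamma k (2 * n + k)%N) /\
  (forall n : nat, (1 <= n)%N ->
        delta k.+1 (2 * n + k)%N
          = delta k (2 * n + k)%N + c k n.-1 * gamma k (2 * n + k)%N) /\
  (forall n : nat,
        beta k.+1 (2 * n + k).+1 = beta k (2 * n + k).+1 - c k n) /\
  (forall n : nat,
        gamma k.+1 (2 * n + k).+1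
          = gamma k (2 * n + k).+1
            - c k n * (beta k (2 * n + k)%N - beta k.+1 (2 * n + k).+1)) /\
  (forall n : nat, (1 <= n)%N ->
        delta k.+1 (2 * n + k).+1
          = delta k (2 * n + k).+1 - c k n * gamma k (2 * n + k)%N) /\
  (forall n : nat, (1 <= n)%N ->
        c k n = c k n.-1 * delta k (2 * n + k).+1
                / (delta k (2 * n + k)%N + c k n.-1 * gamma k (2 * n + k)%N)) /\
  ((1 <= k)%N -> c k 0%N = delta k k.+1 / gamma k k).
Proof.
(* The conventions gamma = 0 and delta = 0 in front of a zero polynomial are not needed. *)
move=> mu1_moments mu2_moments normalP pstep_rec _ _ beta_start P_succ_sub k.
have shift_even := shift_rec_even normalP pstep_rec P_succ_sub k.
have shift_odd := shift_rec_odd normalP pstep_rec P_succ_sub k.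
have two_succ n : (2 * n.+1 + k = (2 * n + k).+2)%N by rewrite mulnS add2n !addSn.
split.
  case=> [|n]; last by rewrite two_succ; case: (shift_even n).
  by rewrite muln0 add0n (shift_beta_start normalP pstep_rec beta_start P_succ_sub).
split; first by case=> // n _; rewrite two_succ; case: (shift_even n).
split; first by case=> // n _; rewrite two_succ; case: (shift_even n).
split; first by move=> n; case: (shift_odd n).
split; first by move=> n; case: (shift_odd n).
split.
  case=> // n _; rewrite two_succ.
  by case: (shift_delta_odd normalP pstep_rec P_succ_sub k n).
split.
  case=> // n _; rewrite two_succ.
  exact: (c_riccati mu1_moments mu2_moments normalP pstep_rec P_succ_sub).
case: k {shift_even shift_odd two_succ} => // k _.
exact: (c_start mu1_moments mu2_moments normalP pstep_rec P_succ_sub).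
Qed.
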